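(* Let $X$ be a topological vector space over $\mathbb{K}$ ($\mathbb{K}=\mathbb{R}$ or $\mathbb{C}$) and let $\alpha$ be an infinite cardinal with $w(X)\le \dim(X)=\alpha$. Then there is a family $\{Y_\kappa\}_{\kappa<\alpha}$ of linear subspaces of $X$ such that: (1) each $Y_\kappa$ is a dense linear subspace of $X$ with $\dim(Y_\kappa)=\alpha$; (2) the family $\{Y_\kappa\}_{\kappa<\alpha}$ is linearly independent, i.e., the sum $\sum_{\kappa<\alpha}Y_\kappa$ is direct (in particular $Y_{\kappa_1}\cap Y_{\kappa_2}=\{0\}$ whenever $\kappa_1\neq\kappa_2$).
   Context: A topological vector space is a vector space with a topology making addition and scalar multiplication continuous. The weight $w(X)$ of a topological space is the smallest cardinality of a base for its topology. Indices $\kappa<\alpha$ range over ordinals less than $\alpha$. *)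

From HB Require Import structures.
From mathcomp Require Import all_boot all_order all_algebra.
From mathcomp Require Import all_classical all_reals all_analysis.
From mathcomp Require Import complex.

Set Implicit Arguments.
Unset Strict Implicit.
Unset Printing Implicit Defensive.

Import Order.TTheory GRing.Theory Num.Theory.
Local Open Scope classical_set_scope.
Local Open Scope ring_scope.
Local Open Scope card_scope.

Section LinAlg.
Variables (K : numDomainType) (V : lmodType K).

Definition is_subspace (Y : set V) : Prop :=
  Y 0 /\ forall (a : K) (x y : V), Y x -> Y y -> Y (a *: x + y).

Definition lin_indep (B : set V) : Prop :=
  forall (s : seq V) (c : V -> K), uniq s -> {subset s <= B} ->
    \sum_(v <- s) c v *: v = 0 -> forall v, v \in s -> c v = 0.

Definition lin_span (B : set V) : set V :=
  [set x | exists (s : seq V) (c : V -> K),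
      {subset s <= B} /\ x = \sum_(v <- s) c v *: v].

Definition hamel_basis (Y B : set V) : Prop :=
  B `<=` Y /\ lin_indep B /\ lin_span B = Y.

Definition dim_eq (Y : set V) (A : Type) : Prop :=
  exists B : set V, hamel_basis Y B /\ (B #= [set: A]).

Definition independent_family (A : choiceType) (Y : A -> set V) : Prop :=
  forall (s : seq A) (y : A -> V), uniq s -> (forall i, i \in s -> Y i (y i)) ->
    \sum_(i <- s) y i = 0 -> forall i, i \in s -> y i = 0.

End LinAlg.

Definition weight_le (X : topologicalType) (A : Type) : Prop :=
  exists B : set (set X), basis B /\ (B #<= [set: A]).

Definition theorem2p2_claim (K : numFieldType) : Prop :=
  forall (X : topologicalLmodType K) (A : choiceType),
    infinite_set [set: A] ->
    weight_le X A ->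
    dim_eq [set: X] A ->
    exists Y : A -> set X,
      (forall k, is_subspace (Y k) /\ dense (Y k) /\ dim_eq (Y k) A) /\
      independent_family Y.

From HB Require Import structures.
From mathcomp Require Import all_boot all_order all_algebra.
From mathcomp Require Import all_classical all_reals all_analysis.
From mathcomp Require Import complex wochoice.
From Stdlib Require Import Wellfounded.
Import numFieldTopology.Exports.

Set Implicit Arguments.
Unset Strict Implicit.
Unset Printing Implicit Defensive.
Import Order.TTheory GRing.Theory Num.Theory.

(* Enumerate the nonempty basic open sets as (U a)_(a : A) and fix a bijection
   pi : A -> A * A.  Along a well-order of A whose initial segments are smaller
   than A, choose by transfinite recursion a vector g i in U (pi i).2 outside the
   span of the g j with j < i: a nonempty open set spans X, whereas fewer than
   dim X = |A| vectors do not.  The g i are then linearly independent, and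
   Y k := span {g i | (pi i).1 = k} meets every U a, so it is dense, has
   dimension |A|, and the Y k form a direct sum. *)

Local Open Scope classical_set_scope.
Local Open Scope card_scope.

Lemma card_le_funP {T U} {A : set T} {B : set U} (u0 : U) :
  A #<= B <-> exists2 f : T -> U, set_fun A B f & set_inj A f.
Proof.
split; last by move=> /injfunPex[f]; exact: inj_card_le.
move=> /card_leP[g].
pose f x := if pselect (A x) is left Ax then val (g (SigSub (mem_set Ax))) else u0.
exists f => [x Ax|x y]; rewrite /f.
  by case: pselect => // ?; case: (g _) => /= y; rewrite inE.
rewrite !inE => Ax Ay; case: pselect => // ?; case: pselect => // ?.
by move=> /val_inj /(@inj _ _ _ g); rewrite !inE => /(_ I I) [].
Qed.

Lemma card_eq_bijP {T U} {A : set T} {B : set U} (u0 : U) :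
  A #= B <-> exists f : T -> U, set_bij A B f.
Proof.
split; last by move=> /bijPex[f]; exact: pcard_eq.
move=> /card_bijP[g [ginv gK Kg]].
pose f x := if pselect (A x) is left Ax then val (g (SigSub (mem_set Ax))) else u0.
exists f; split => [x Ax|x y|y By]; rewrite /f.
- by case: pselect => // ?; case: (g _) => /= y; rewrite inE.
- rewrite !inE => Ax Ay; case: pselect => // ?; case: pselect => // ?.
  by move=> /val_inj /(can_inj gK) [].
- exists (val (ginv (SigSub (mem_set By)))); first by case: (ginv _) => /= x; rewrite inE.
  case: pselect => [Ax|]; last by case: (ginv _) => /= x; rewrite inE.
  set z := SigSub _; have -> : z = ginv (SigSub (mem_set By)) by exact: val_inj.
  by rewrite Kg.
Qed.

Lemma card_le_rel {T U} (A : set T) (B : set U) (G : set (T * U)) :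
  (forall x, A x -> exists2 y, B y & G (x, y)) ->
  (forall x x' y, G (x, y) -> G (x', y) -> x = x') -> A #<= B.
Proof.
move=> GA Ginj; have [->|/set0P[x0 /GA[y0 _ _]]] := eqVneq A set0; first exact: card_ge0.
pose f x := if pselect (exists2 y, B y & G (x, y)) is left h then projT1 (cid2 h) else y0.
have fG x : A x -> B (f x) /\ G (x, f x).
  by move=> /GA h; rewrite /f; case: pselect => // h'; case: (cid2 h').
apply/(card_le_funP y0); exists f; first by move=> x /fG[].
move=> x y /set_mem/fG[_ Gx] /set_mem/fG[_ Gy] fxy.
by apply: Ginj Gx _; rewrite fxy.
Qed.

Lemma bigcup_chain2 {T} (F : set (set T)) p q : total_on F subset ->
  (\bigcup_(X in F) X) p -> (\bigcup_(X in F) X) q -> exists2 X, F X & X p /\ X q.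
Proof.
move=> Ftot [X FX Xp] [Y FY Yq].
have [XY|YX] := Ftot _ _ FX FY; first by exists Y => //; split => //; exact: XY.
by exists X => //; split => //; exact: YX.
Qed.

Lemma card_le_total {T U} (A : set T) (B : set U) : A #<= B \/ B #<= A.
Proof.
pose P (G : set (T * U)) := [/\ G `<=` A `*` B,
  forall x y y', G (x, y) -> G (x, y') -> y = y' &
  forall x x' y, G (x, y) -> G (x', y) -> x = x'].
have [G [[GAB Gfun Ginj] Gmax]] : exists G, P G /\ forall G', G `<` G' -> ~ P G'.
  apply: Zorn_bigcup => F FP Ftot; split.
  - by move=> p [G /FP[+ _ _]]; apply.
  - move=> x y y' Gy Gy'; have [G /FP[_ Gf _] [Gy1 Gy2]] := bigcup_chain2 Ftot Gy Gy'.
    exact: Gf Gy1 Gy2.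
  - move=> x x' y Gx Gx'; have [G /FP[_ _ Gi] [Gx1 Gx2]] := bigcup_chain2 Ftot Gx Gx'.
    exact: Gi Gx1 Gx2.
have [[a Aa aG]|domA] := pselect (exists2 a, A a & forall b, ~ G (a, b)); last first.
  left; apply: card_le_rel Ginj => x Ax; apply: contrapT => xG; apply: domA.
  by exists x => // y Gxy; apply: xG; exists y => //; have [] := GAB _ Gxy.
right; apply: (@card_le_rel _ _ _ _ [set q | G (q.2, q.1)]) => [b Bb|y y' x]; last exact: Gfun.
apply: contrapT => bG; have PG' : P (G `|` [set (a, b)]).
  split=> [p [/GAB//|->//]|x y y'|x x' y].
  - move=> [Gx|/pair_equal_spec[-> ->]] [Gx'|/pair_equal_spec[ex ->]] //.
    + exact: Gfun Gx Gx'.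
    + by move: Gx; rewrite ex => /aG.
    + by move: Gx' => /aG.
  - move=> [Gx|/pair_equal_spec[-> ->]] [Gx'|/pair_equal_spec[-> ey]] //.
    + exact: Ginj Gx Gx'.
    + by case: bG; exists x; [have [] := GAB _ Gx|rewrite -ey].
    + by case: bG; exists x'; [have [] := GAB _ Gx'|].
apply: (Gmax _ _ PG'); split=> [p Gp|]; first by left.
by move=> /(_ (a, b) (or_intror erefl)) /aG.
Qed.

Lemma card_setX_le {T U T' U'} (A : set T) (B : set U) (A' : set T') (B' : set U') :
  A #<= A' -> B #<= B' -> A `*` B #<= A' `*` B'.
Proof.
move=> AA' BB'; have [A'0|/set0P[a' _]] := eqVneq A' set0.
  by move: AA'; rewrite A'0 => /card_le0P ->; rewrite set0X; exact: card_ge0.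
have [B'0|/set0P[b' _]] := eqVneq B' set0.
  by move: BB'; rewrite B'0 => /card_le0P ->; rewrite setX0; exact: card_ge0.
have [f fA finj] := (card_le_funP a').1 AA'.
have [g gB ginj] := (card_le_funP b').1 BB'.
apply/(card_le_funP (a', b') (A := A `*` B)); exists (fun p => (f p.1, g p.2)).
  by move=> [x1 x2] [/= Ax1 Bx2]; split; [exact: fA|exact: gB].
move=> [x1 x2] [y1 y2] /set_mem[/= Ax1 Bx2] /set_mem[/= Ay1 By2] [e1 e2].
by rewrite (finj _ _ (mem_set Ax1) (mem_set Ay1) e1) (ginj _ _ (mem_set Bx2) (mem_set By2) e2).
Qed.

Lemma card_setU_le_setX {T U} (A B : set T) (C : set U) (c0 c1 : U) :
  C c0 -> C c1 -> c0 <> c1 -> A #<= C -> B #<= C -> A `|` B #<= C `*` C.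
Proof.
move=> Cc0 Cc1 c01 /(card_le_funP c0)[f fA finj] /(card_le_funP c0)[g gB ginj].
apply/(card_le_funP (c0, c0) (A := A `|` B)).
exists (fun x => if pselect (A x) then (f x, c0) else (g x, c1)).
  move=> x ABx; case: pselect => [Ax|nAx]; split => //=; first exact: fA.
  by case: ABx => // /gB.
move=> x y /set_mem ABx /set_mem ABy.
case: pselect => Ax; case: pselect => Ay /pair_equal_spec[e1 e2] //; try by case: c01.
- exact: finj (mem_set Ax) (mem_set Ay) e1.
- by case: ABx => // Bx; case: ABy => // By; exact: ginj (mem_set Bx) (mem_set By) e1.
Qed.

Section Hessenberg.
Variables (T : Type) (S : set T).
Implicit Types (G : set ((T * T) * T)) (E : set T).

Definition graph_range G : set T := [set x | exists p, G (p, x)].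

(* [G] is the graph of a bijection from the square of its range onto its range. *)
Definition square_bij_graph G := [/\
  forall p x y, G (p, x) -> G (p, y) -> x = y,
  forall p q x, G (p, x) -> G (q, x) -> p = q,
  forall a b, graph_range G a -> graph_range G b -> exists x, G ((a, b), x),
  forall p x, G (p, x) -> graph_range G p.1 /\ graph_range G p.2 &
  graph_range G `<=` S].

Lemma square_bij_graph_bigcup (F : set (set ((T * T) * T))) :
  F `<=` square_bij_graph -> total_on F subset ->
  square_bij_graph (\bigcup_(G in F) G).
Proof.
move=> Fsq Ftot; split.
- move=> p x y Gx Gy; have [G /Fsq[Gf _ _ _ _] [Gx' Gy']] := bigcup_chain2 Ftot Gx Gy.
  exact: Gf Gx' Gy'.
- move=> p q x Gp Gq; have [G /Fsq[_ Gi _ _ _] [Gp' Gq']] := bigcup_chain2 Ftot Gp Gq.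
  exact: Gi Gp' Gq'.
- move=> a b [p Ga] [q Gb].
  have [G /[dup] FG /Fsq[_ _ Gtot _ _] [Ga' Gb']] := bigcup_chain2 Ftot Ga Gb.
  have [x Gx] := Gtot a b (ex_intro _ p Ga') (ex_intro _ q Gb').
  by exists x, G.
- move=> p x [G FG Gp]; have [_ _ _ Gdom _] := Fsq _ FG.
  by have [[q1 G1] [q2 G2]] := Gdom p x Gp; split; [exists q1|exists q2]; exists G.
- by move=> x [p [G FG Gp]]; have [_ _ _ _ GS] := Fsq _ FG; apply: GS; exists p.
Qed.

Lemma square_bij_graph_card G : square_bij_graph G ->
  graph_range G `*` graph_range G #<= graph_range G.
Proof.
move=> [_ Ginj Gtot _ _]; apply: (card_le_rel (G := G)) => [[a b] [/= Ra Rb]|]; last exact: Ginj.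
by have [x Gx] := Gtot a b Ra Rb; exists x => //; exists (a, b).
Qed.

Lemma square_bij_graph_nat (i : nat -> T) : (forall n, S (i n)) -> injective i ->
  exists2 G, square_bij_graph G & graph_range G = range i.
Proof.
move=> iS iinj; have [pi [_ piinj pisurj]] := (card_eq_bijP 0%N).1 card_nat2.
pose G := [set q : (T * T) * T | exists a b, q = ((i a, i b), i (pi (a, b)))].
have GR : graph_range G = range i.
  apply/seteqP; split => [_ [p [a [b [_ ->]]]]|_ [n _ <-]]; first by exists (pi (a, b)).
  by have [[a b] _ <-] := pisurj n I; exists (i a, i b), a, b.
exists G => //; split; rewrite ?GR.
- by move=> p x y [a [b [-> ->]]] [a' [b' [/iinj -> /iinj -> ->]]].
- move=> p q x [a [b [-> ->]]] [a' [b' [-> /iinj /piinj]]].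
  by rewrite !inE => /(_ I I) [-> ->].
- by move=> _ _ [a _ <-] [b _ <-]; exists (i (pi (a, b))), a, b.
- by move=> p x [a [b [-> _]]]; split; [exists a|exists b].
- by move=> _ [n _ <-].
Qed.

Definition new_pairs G E : set (T * T) :=
  let R := graph_range G in (R `|` E) `*` (R `|` E) `\` R `*` R.

Lemma square_bij_graph_setU G E (phi : T * T -> T) :
  square_bij_graph G -> E `<=` S -> graph_range G `&` E = set0 ->
  set_bij (new_pairs G E) E phi ->
  square_bij_graph (G `|` [set (p, phi p) | p in new_pairs G E]).
Proof.
move=> [Gf Gi Gtot Gdom GS] ES RE0 [phiE phiinj phisurj].
set R := graph_range G; set Q := new_pairs G E; set G' := G `|` _.
have RE x : R x -> E x -> False by move=> Rx Ex; have : (R `&` E) x by []; rewrite RE0.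
have GQ p x : G (p, x) -> Q p -> False by move=> /Gdom[R1 R2] [_ []].
have G'R : graph_range G' = R `|` E.
  apply/seteqP; split => [x [p [Gx|[q Qq [_ <-]]]]|x [Rx|Ex]].
  - by left; exists p.
  - by right; exact: phiE.
  - by have [p Gp] := Rx; exists p; left.
  - by have [p Qp <-] := phisurj x Ex; exists p; right; exists p.
split; rewrite ?G'R.
- move=> p x y [Gx|[q Qq [<- <-]]] [Gy|[q' Qq' [e <-]]]; first exact: Gf Gx Gy.
  + by case: (GQ _ _ Gx); rewrite -e.
  + by case: (GQ _ _ Gy).
  + by rewrite e.
- move=> p q x [Gp|[p' Qp' [<- <-]]] [Gq|[q' Qq' [<- ex]]].
  + exact: Gi Gp Gq.
  + by case: (RE x); [exists p|rewrite -ex; exact: phiE].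
  + by case: (RE (phi p')); [exists q|exact: phiE].
  + by apply: phiinj; rewrite ?inE.
- move=> a b Ra Rb; have [[Ra' Rb']|nR] := pselect (R a /\ R b).
    by have [x Gx] := Gtot a b Ra' Rb'; exists x; left.
  by exists (phi (a, b)); right; exists (a, b).
- move=> p x [/Gdom[R1 R2]|[q [[RE1 RE2] _] [<- _]]]; first by split; left.
  by split.
- by move=> x [/GS|/ES].
Qed.

(* Unless S is dominated by the range R of G, S \ R contains a copy E of R, and G
   extends by a bijection from (R u E)^2 \ R^2 onto E, as both have size |R|. *)
Lemma square_bij_graph_extend G (r0 r1 : T) : square_bij_graph G ->
  graph_range G r0 -> graph_range G r1 -> r0 <> r1 -> ~ (S #<= graph_range G) ->
  exists2 G', square_bij_graph G' & G `<` G'.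
Proof.
move=> Gsq Rr0 Rr1 r01 nSR; set R := graph_range G.
have [_ _ _ Gdom _] := Gsq.
have RR := square_bij_graph_card Gsq.
have RU E : E #<= R -> R `|` E #<= R.
  by move=> ER; apply: card_le_trans RR; exact: card_setU_le_setX Rr0 Rr1 r01 (card_lexx R) ER.
have [DR|RD] := card_le_total (S `\` R) R.
  case: nSR; apply: card_le_trans (RU _ DR); apply: subset_card_le => x Sx.
  by have [Rx|nRx] := pselect (R x); [left|right].
have [h hD hinj] := (card_le_funP r0).1 RD.
pose E := h @` R.
have ES : E `<=` S by move=> _ [x /hD[Shx _] <-].
have RE0 : R `&` E = set0.
  by apply/seteqP; split => // y [Ry [x /hD[_ nRhx] hxy]]; apply: nRhx; rewrite hxy.
have notRE y : E y -> ~ R y by move=> Ey Ry; have : (R `&` E) y by []; rewrite RE0.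
have ER : E #<= R by exact: card_image_le.
have RE : R #<= E by have := inj_card_eq hinj; rewrite card_eq_sym card_eq_le => /andP[].
have [phi phibij] : exists phi, set_bij (new_pairs G E) E phi.
  apply/(card_eq_bijP r0)/Cantor_Bernstein.
    apply: card_le_trans RE; apply: card_le_trans RR.
    apply: card_le_trans (card_setX_le (RU E ER) (RU E ER)).
    by apply: subset_card_le => p [].
  apply/(card_le_funP (r0, r0)); exists (fun y => (y, y)) => [y Ey|y z _ _ [] //].
  by split; [split; right|move=> [/notRE]].
exists (G `|` [set (p, phi p) | p in new_pairs G E]); first exact: square_bij_graph_setU.
split; first exact: subsetUl.
have Ee : E (h r0) by exists r0.
have Qe : new_pairs G E (h r0, h r0) by split; [split; right|move=> [/notRE]].
move=> /(_ ((h r0, h r0), phi (h r0, h r0))) /(_ (or_intror (ex_intro2 _ _ _ Qe erefl))).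
by move=> /Gdom[/notRE].
Qed.

End Hessenberg.

Lemma infinite_card_setXX_le {T} (S : set T) : infinite_set S -> S `*` S #<= S.
Proof.
move=> Sinf; have [t0 _] := infinite_setN0 Sinf.
have [i iS iinj] := (card_le_funP t0).1 ((infiniteP S).1 Sinf).
have {}iS n : S (i n) by exact: iS.
have {}iinj : injective i by move=> m n; apply: iinj; rewrite inE.
have [G0 G0sq G0R] := square_bij_graph_nat iS iinj.
have G0i n : graph_range G0 (i n) by rewrite G0R; exists n.
(* The alternative [G = set0] gives the empty chain an upper bound. *)
pose P G := (G = set0 \/ G0 `<=` G) /\ square_bij_graph S G.
have [M [[[M0|G0M] Msq] Mmax]] : exists M, P M /\ forall G, M `<` G -> ~ P G.
- apply: Zorn_bigcup => F FP Ftot; split; last by apply: square_bij_graph_bigcup => // G /FP[].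
  have [[G FG G0G]|noG0] := pselect (exists2 G, F G & G0 `<=` G).
    by right; apply: subset_trans G0G _; exact: bigcup_sup.
  left; apply/seteqP; split => // q [G FG Gq]; have [[G0'|G0G] _] := FP _ FG.
    by move: Gq; rewrite G0'.
  by case: noG0; exists G.
- have [p G0p] := G0i 0%N; exfalso; apply: (Mmax G0); last by split => //; right.
  by rewrite M0; split => // /(_ _ G0p).
have iR n : graph_range M (i n) by have [p G0p] := G0i n; exists p; exact: G0M.
have [SR|nSR] := pselect (S #<= graph_range M).
  have [_ _ _ _ RS] := Msq.
  apply: card_le_trans (card_setX_le SR SR) (card_le_trans _ (subset_card_le RS)).
  exact: square_bij_graph_card Msq.
have i01 : i 0%N <> i 1%N by move/iinj.
have [M' M'sq [MM' M'M]] := square_bij_graph_extend Msq (iR 0%N) (iR 1%N) i01 nSR.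
by case: (Mmax M' (conj MM' M'M)); split => //; right; exact: subset_trans G0M MM'.
Qed.

Lemma infinite_card_setXX {T} (S : set T) : infinite_set S -> S `*` S #= S.
Proof.
move=> Sinf; have [s0 Ss0] := infinite_setN0 Sinf.
apply: Cantor_Bernstein; first exact: infinite_card_setXX_le.
apply/(card_le_funP (s0, s0)); exists (fun x => (x, s0)) => [x Sx|x y _ _ [] //].
by split.
Qed.

Lemma card_fst_fiber {T U} (u0 : U) (f : T -> U * U) (k : U) :
  set_bij [set: T] [set: U * U] f -> [set x | (f x).1 = k] #= [set: U].
Proof.
move=> [_ finj fsurj]; apply/(card_eq_bijP u0); exists (fun x => (f x).2).
split=> [//|x y|u _]; last by have [x _ fx] := fsurj (k, u) I; exists x; rewrite /= fx.
rewrite !inE /= => xk yk e; apply: finj; rewrite ?inE //.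
by rewrite [f x]surjective_pairing [f y]surjective_pairing xk yk e.
Qed.

Definition strict_well_order {T} (lt : T -> T -> Prop) := [/\ well_founded lt,
  forall x y, x <> y -> lt x y \/ lt y x & forall x y z, lt x y -> lt y z -> lt x z].

Lemma well_order_trans (T : eqType) (R : rel T) : well_order R -> transitive R.
Proof.
move=> wo y x z xy yz; have woR : wo_chain R predT by move=> A _; exact: wo.
have anti := wo_chain_antisymmetric woR.
have [|m [[+ lbm] _]] := wo (mem [:: x; y; z]); first by exists x; rewrite inE eqxx.
rewrite !inE => /or3P[] /eqP em; subst m.
- by apply: lbm; rewrite !inE eqxx !orbT.
- by rewrite (anti x y) // xy lbm // !inE eqxx.
- by rewrite -(anti y z) // yz lbm // !inE eqxx !orbT.
Qed.

Lemma well_order_strict (T : eqType) (R : rel T) : well_order R ->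
  strict_well_order (fun x y => R x y /\ x <> y).
Proof.
move=> wo; have woR : wo_chain R predT by move=> A _; exact: wo.
have anti := wo_chain_antisymmetric woR.
split.
- move=> x; apply: contrapT => nx.
  have [|z [[+ lbz] _]] := wo (mem [set x | ~ Acc (fun x y => R x y /\ x <> y) x]).
    by exists x; rewrite inE.
  rewrite inE => + ; apply; constructor => y [yz nyz].
  apply: contrapT => ny; apply: nyz; apply: anti => //.
  by rewrite yz lbz // inE.
- move=> x y xy; have /orP[Rxy|Ryx] : R x y || R y x by apply: (wo_chainW woR).
    by left.
  by right; split => // /esym.
- move=> x y z [Rxy xy] [Ryz yz]; split; first exact: well_order_trans Rxy Ryz.
  by move=> exz; subst z; apply: xy; apply: anti; rewrite // Rxy.
Qed.

Lemma initial_well_order (T : choiceType) (t0 : T) : exists lt : T -> T -> Prop,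
  strict_well_order lt /\ forall x, ~ ([set: T] #<= [set y | lt y x]).
Proof.
have [R wo] := well_ordering_principle T.
have woR : wo_chain R predT by move=> A _; exact: wo.
pose lt0 x y := R x y /\ x <> y.
have [wf0 tot0 trans0] := well_order_strict wo.
pose big x := [set: T] #<= [set y | lt0 y x].
have [[x0 bigx0]|small] := pselect (exists x, big x); last first.
  by exists lt0; split => // x bigx; apply: small; exists x.
(* Otherwise transport the order along a bijection of T with the least large segment. *)
have [|m [[+ lbm] _]] := wo (mem big); first by exists x0; rewrite in_setE; apply/asboolP.
rewrite in_setE => /asboolP bigm.
have [phi [phiS phiinj _]] : exists phi, set_bij [set: T] [set y | lt0 y m] phi.
  by apply/(card_eq_bijP t0)/Cantor_Bernstein => //; exact: card_leT.
exists (fun x y => lt0 (phi x) (phi y)); split.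
  split => [|x y xy|x y z]; [exact: wf_inverse_image|apply: tot0|exact: trans0].
  by move=> /phiinj; rewrite !inE => /(_ I I).
move=> x bigx; have [Rxm xm] := phiS x I; apply: xm.
apply: (wo_chain_antisymmetric woR) => //; rewrite Rxm /=.
apply: lbm; rewrite in_setE; apply/asboolP; apply: card_le_trans bigx _.
by apply/(card_le_funP t0); exists phi => // y z _ _; apply: phiinj; rewrite inE.
Qed.

Local Open Scope ring_scope.

Lemma sumr_count_mem (V : nmodType) (I : eqType) (s r : seq I) (F : I -> V) :
  uniq r -> {subset s <= r} -> \sum_(i <- s) F i = \sum_(i <- r) F i *+ count_mem i s.
Proof.
move=> ur; elim: s => [|x s IH] sr; first by rewrite big_nil big1 // => i _; rewrite mulr0n.
rewrite big_cons IH => [|i si]; last by apply: sr; rewrite inE si orbT.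
under [RHS]eq_bigr => i _ do rewrite /= mulrnDr.
rewrite big_split /=; congr (_ + _).
rewrite (bigD1_seq x) ?sr ?mem_head //= eqxx mulr1n big1 ?addr0 // => i.
by rewrite eq_sym => /negPf ->.
Qed.

Section LinearSpan.
Variables (K : numDomainType) (V : lmodType K).
Implicit Types (B E F W : set V).

Lemma subspaceD W x y : is_subspace W -> W x -> W y -> W (x + y).
Proof. by move=> [_ WZD] Wx Wy; have := WZD 1 x y Wx Wy; rewrite scale1r. Qed.

Lemma subspaceZ W a x : is_subspace W -> W x -> W (a *: x).
Proof. by move=> [W0 WZD] Wx; have := WZD a x 0 Wx W0; rewrite addr0. Qed.

Lemma subspaceN W x : is_subspace W -> W x -> W (- x).
Proof. by move=> Wsub Wx; rewrite -scaleN1r; exact: subspaceZ. Qed.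

Lemma subspaceB W x y : is_subspace W -> W x -> W y -> W (x - y).
Proof. by move=> Wsub Wx Wy; apply: subspaceD => //; exact: subspaceN. Qed.

Lemma lin_span_uniq B x : lin_span B x ->
  exists s (c : V -> K), [/\ uniq s, {subset s <= B} & x = \sum_(v <- s) c v *: v].
Proof.
move=> [s [c [sB ->]]]; exists (undup s), (fun v => c v *+ count_mem v s).
split=> [|v|]; first exact: undup_uniq; first by rewrite mem_undup => /sB.
rewrite (@sumr_count_mem _ _ s (undup s)) ?undup_uniq // => [|v]; last by rewrite mem_undup.
by apply: eq_bigr => v _; rewrite scalerMnl.
Qed.

Lemma lin_span_subspace B : is_subspace (lin_span B).
Proof.
split=> [|a _ _ [s1 [c1 [s1B ->]]] [s2 [c2 [s2B ->]]]].
  by exists [::], (fun _ => 0); rewrite big_nil.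
pose r := undup (s1 ++ s2).
have s1r : {subset s1 <= r} by move=> v vs; rewrite mem_undup mem_cat vs.
have s2r : {subset s2 <= r} by move=> v vs; rewrite mem_undup mem_cat vs orbT.
exists r, (fun v => (a * c1 v) *+ count_mem v s1 + c2 v *+ count_mem v s2).
split=> [v|]; first by rewrite mem_undup mem_cat => /orP[/s1B|/s2B].
rewrite scaler_sumr (@sumr_count_mem _ _ s1 r) ?undup_uniq //.
rewrite (@sumr_count_mem _ _ s2 r) ?undup_uniq // -big_split.
by apply: eq_bigr => v _; rewrite scalerDl !scalerMnl scalerA mulrnAl.
Qed.

Lemma lin_span_sub B W : is_subspace W -> B `<=` W -> lin_span B `<=` W.
Proof.
move=> Wsub BW _ [s [c [sB ->]]]; elim: s sB => [|v s IH] sB.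
  by rewrite big_nil; case: Wsub.
rewrite big_cons; apply: Wsub.2; first by apply/BW/set_mem/sB; rewrite mem_head.
by apply: IH => w ws; apply: sB; rewrite inE ws orbT.
Qed.

Lemma sub_lin_span B : B `<=` lin_span B.
Proof.
move=> x Bx; exists [:: x], (fun _ => 1); rewrite big_seq1 scale1r; split => //.
by move=> v; rewrite inE => /eqP ->; exact: mem_set.
Qed.

Lemma lin_spanS B B' : B `<=` B' -> lin_span B `<=` lin_span B'.
Proof.
move=> BB'; apply: lin_span_sub; first exact: lin_span_subspace.
exact: subset_trans (@sub_lin_span B').
Qed.

Lemma lin_indep_sub E F : lin_indep E -> F `<=` E -> lin_indep F.
Proof. by move=> Eindep FE s c us sF; apply: Eindep => // v /sF/set_mem/FE/mem_set. Qed.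

Lemma lin_indep_mem_span E F e : lin_indep E -> F `<=` E -> E e -> lin_span F e -> F e.
Proof.
move=> Eindep FE Ee /lin_span_uniq[s [c [us sF ed]]].
have [/sF/set_mem//|es] := boolP (e \in s).
pose c' v := if v == e then -1 else c v.
suff : c' e = 0 by rewrite /c' eqxx => /eqP; rewrite oppr_eq0 oner_eq0.
apply: (Eindep (e :: s)) => [||//|]; last exact: mem_head.
- by rewrite /= es.
- by move=> v; rewrite inE => /orP[/eqP ->|/sF/set_mem/FE]; exact: mem_set.
rewrite big_cons /c' eqxx scaleN1r big_seq (eq_bigr (fun v => c v *: v)) -?big_seq -?ed ?addNr //.
by move=> v vs; case: eqP => // ve; move: vs; rewrite ve (negPf es).
Qed.

Lemma lin_indep_span_disjoint E P Q y z : lin_indep E -> P `<=` E -> Q `<=` E ->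
  P `&` Q = set0 -> lin_span P y -> lin_span Q z -> y + z = 0 -> y = 0.
Proof.
move=> Eindep PE QE PQ0 /lin_span_uniq[s [c [us sP ->]]] /lin_span_uniq[t [d [ut tQ ->]]] yz0.
have st v : v \in s -> v \in t -> False.
  by move=> /sP/set_mem Pv /tQ/set_mem Qv; have : (P `&` Q) v by []; rewrite PQ0.
pose cd v := if v \in s then c v else d v.
have cdE : \sum_(v <- s ++ t) cd v *: v = 0.
  rewrite big_cat -[RHS]yz0 /=; congr (_ + _); rewrite big_seq [RHS]big_seq.
    by apply: eq_bigr => v vs; rewrite /cd vs.
  by apply: eq_bigr => v vt; rewrite /cd; case: ifP => // vs; case: (st v).
rewrite big_seq big1 // => v vs; suff -> : c v = 0 by rewrite scale0r.
have := Eindep (s ++ t) cd _ _ cdE v; rewrite /cd vs mem_cat vs; apply => //.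
  rewrite cat_uniq us ut andbT /=; apply/hasPn => v' vt; apply/negP => vs'.
  exact: st vs' vt.
by move=> v'; rewrite mem_cat => /orP[/sP/set_mem/PE|/tQ/set_mem/QE]; exact: mem_set.
Qed.

Lemma independent_family_lin_span (I : choiceType) E (B : I -> set V) :
  lin_indep E -> (forall i, B i `<=` E) -> (forall i j v, B i v -> B j v -> i = j) ->
  independent_family (fun i => lin_span (B i)).
Proof.
move=> Eindep BE Binj; elim=> [|i s IH] y //= /andP[si us] yB; rewrite big_cons => ys0.
pose Bs := \bigcup_(j in [set j | j \in s]) B j.
have Bsy : lin_span Bs (\sum_(j <- s) y j).
  rewrite big_seq; apply: (big_ind (lin_span Bs)) => [|a b|j js].
  - exact: (lin_span_subspace Bs).1.
  - exact: subspaceD (lin_span_subspace Bs).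
  - by apply: lin_spanS (yB j _); [exact: bigcup_sup|rewrite inE js orbT].
have yi0 : y i = 0.
  apply: (lin_indep_span_disjoint Eindep (BE i) _ _ (yB i (mem_head _ _)) Bsy ys0).
    by move=> v [j _ /BE].
  apply/seteqP; split => // v [Biv [j js Bjv]].
  by move: si; rewrite (Binj _ _ _ Biv Bjv) js.
move: ys0; rewrite yi0 add0r => ys0 j; rewrite inE => /orP[/eqP ->//|js].
by apply: IH => // k ks; apply: yB; rewrite inE ks orbT.
Qed.

Lemma lin_span_support E C : C `<=` lin_span E -> exists F, [/\ F `<=` E,
  C `<=` lin_span F, F #<= C `*` [set: nat] & finite_set C -> finite_set F].
Proof.
move=> CE.
have [sc scP] : {sc : V -> seq V & forall c, C c -> {subset sc c <= E} /\ lin_span [set` sc c] c}.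
  apply: (@choice _ _ (fun c s => C c -> {subset s <= E} /\ lin_span [set` s] c)) => c.
  have [/CE[s [a [sE ->]]]|nCc] := pselect (C c); last by exists [::].
  by exists s => _; split => //; exists s, a; split => // v; exact: mem_set.
exists (\bigcup_(c in C) [set` sc c]); split.
- by move=> v [c Cc /= /(scP c Cc).1 /set_mem].
- by move=> c Cc; apply: lin_spanS (scP c Cc).2 => v vc; exists c.
- apply: card_le_trans (card_image_le (fun p => nth 0 (sc p.1) p.2) _).
  apply: subset_card_le => v [c Cc /= vc].
  by exists (c, index v (sc c)) => //=; rewrite nth_index.
- by move=> Cfin; apply: bigcup_finite => // c _; exact: finite_seq.
Qed.

Lemma lin_indep_card_le E C : lin_indep E -> infinite_set E ->
  C `<=` lin_span E -> E `<=` lin_span C -> E #<= C.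
Proof.
move=> Eindep Einf CE EC; have [F [FE CF FC CFfin]] := lin_span_support CE.
have EF : E `<=` F.
  move=> e Ee; apply: (lin_indep_mem_span Eindep FE Ee).
  exact: lin_span_sub (lin_span_subspace F) CF _ (EC e Ee).
have [Cfin|Cinf] := pselect (finite_set C).
  by case: Einf; exact: sub_finite_set EF (CFfin Cfin).
apply: card_le_trans (subset_card_le EF) (card_le_trans FC _).
apply: card_le_trans (infinite_card_setXX_le Cinf).
exact: card_setX_le (card_lexx C) ((infiniteP C).1 Cinf).
Qed.

End LinearSpan.

Lemma open_lin_span (K : numFieldType) (X : topologicalLmodType K) (U : set X) :
  open U -> U !=set0 -> lin_span U = setT.
Proof.
move=> Uopen [u Uu]; apply/seteqP; split => // x _.
have scale_cont : (fun t : K => t *: x) @ nbhs (0 : K) --> (0 : K) *: x.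
  apply: (@continuous_comp K (K^o * X)%type X (fun t => (t, x)) (fun z => z.1 *: z.2)).
    exact: cvg_pair (@cvg_id _ (nbhs (0 : K^o))) (cvg_cst x).
  exact: scale_continuous.
have cont : (fun t : K => u + t *: x) @ nbhs (0 : K) --> u + (0 : K) *: x.
  apply: (@continuous_comp K (X * X)%type X (fun t => (u, t *: x)) (fun z => z.1 + z.2)).
    exact: cvg_pair (cvg_cst u) scale_cont.
  exact: add_continuous.
rewrite scale0r addr0 in cont.
have /nbhs_ballP[e e0 eU] : nbhs (0 : K) [set t | U (u + t *: x)].
  by apply: cont; apply: open_nbhs_nbhs.
have e20 : 0 < e / 2 by rewrite divr_gt0.
have Uue : U (u + (e / 2) *: x).
  by apply: eU; rewrite /ball /= sub0r normrN gtr0_norm // ltr_pdivrMr // ltr_pMr // ltr1n.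
have -> : x = (e / 2)^-1 *: ((u + (e / 2) *: x) - u).
  by rewrite addrC addKr scalerA mulVf ?scale1r // gt_eqF.
apply: subspaceZ; first exact: lin_span_subspace.
by apply: subspaceB; [exact: lin_span_subspace|exact: sub_lin_span..].
Qed.

Lemma open_not_in_small_span (K : numFieldType) (X : topologicalLmodType K) (E C O : set X) :
  lin_indep E -> lin_span E = setT -> infinite_set E -> ~ (E #<= C) ->
  open O -> O !=set0 -> O `\` lin_span C !=set0.
Proof.
move=> Eindep EX Einf EC Oopen O0; apply/set0P/eqP => OC.
apply: EC; apply: lin_indep_card_le => // [x _|x _]; first by rewrite EX.
have OC' : O `<=` lin_span C.
  by move=> y Oy; apply: contrapT => nCy; have : (O `\` lin_span C) y by []; rewrite OC.
by apply: (lin_span_sub (lin_span_subspace C) OC'); rewrite (open_lin_span Oopen O0).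
Qed.

Section TransfiniteChoice.
Variables (I U : Type) (lt : I -> I -> Prop) (u0 : U) (P : I -> set U -> set U).
Hypothesis lt_wf : well_founded lt.
Hypothesis P_small : forall i (C : set U), C #<= [set j | lt j i] -> P i C !=set0.

Let pick i (C : set U) : U := if pselect (P i C !=set0) is left h then projT1 (cid h) else u0.

Let grec := Fix lt_wf (fun _ => U)
  (fun i rec => pick i [set v | exists j (h : lt j i), v = rec j h]).

Let grecE i : grec i = pick i (grec @` [set j | lt j i]).
Proof.
rewrite /grec Fix_eq => [|x f f' ff']; last first.
  by congr pick; apply/seteqP; split => v [j [h ->]]; exists j, h.
by congr pick; apply/seteqP; split => [v [j [h ->]]|_ [j h <-]]; [exists j|exists j, h].
Qed.

Lemma wf_choice : exists g : I -> U, forall i, P i (g @` [set j | lt j i]) (g i).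
Proof.
exists grec => i; rewrite [X in P i _ X]grecE /pick.
case: pselect => [h|]; first exact: projT2 (cid h).
by case; apply: P_small; exact: card_image_le.
Qed.

End TransfiniteChoice.

Lemma seq_max_strict (I : eqType) (lt : I -> I -> Prop) (s : seq I) :
  (forall x y, x <> y -> lt x y \/ lt y x) -> (forall x y z, lt x y -> lt y z -> lt x z) ->
  s != [::] -> exists2 m, m \in s & forall j, j \in s -> j = m \/ lt j m.
Proof.
move=> tot tr; elim: s => // x [|y s] IH _.
  by exists x; rewrite ?mem_head // => j; rewrite inE => /eqP; left.
have [//|m ms mmax] := IH.
have [->|xm] := pselect (x = m).
  by exists m; [rewrite mem_head|move=> j; rewrite inE => /orP[/eqP->|/mmax]; auto].
have [xltm|mltx] := tot _ _ xm.
  exists m; first by rewrite inE ms orbT.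
  by move=> j; rewrite inE => /orP[/eqP->|/mmax]; auto.
exists x; first exact: mem_head.
move=> j; rewrite inE => /orP[/eqP->|/mmax[->|jm]]; [left|right|right] => //.
exact: tr jm mltx.
Qed.

Section OutsideSpanOfPredecessors.
Variables (K : numFieldType) (V : lmodType K) (I : eqType) (lt : I -> I -> Prop).
Hypothesis lt_total : forall x y, x <> y -> lt x y \/ lt y x.
Hypothesis lt_trans : forall x y z, lt x y -> lt y z -> lt x z.
Variable g : I -> V.
Hypothesis g_new : forall i, ~ lin_span (g @` [set j | lt j i]) (g i).

Lemma outside_span_inj : injective g.
Proof.
move=> i j gij; apply: contrapT => /lt_total[ij|ji].
  by case: (@g_new j); rewrite -gij; apply: sub_lin_span; exists i.
by case: (@g_new i); rewrite gij; apply: sub_lin_span; exists j.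
Qed.

Lemma outside_span_indep : lin_indep (range g).
Proof.
move=> s c us sg s0 v0 v0s; apply: contrapT => cv0.
have [i0 _ _] := set_mem (sg v0 v0s).
have [idx idxK] : {idx : V -> I & forall v, v \in s -> g (idx v) = v}.
  apply: (@choice _ _ (fun v i => v \in s -> g i = v)) => v.
  by have [/sg/set_mem[i _ <-]|vs] := boolP (v \in s); [exists i|exists i0].
pose s' := [seq v <- s | c v != 0].
have v0s' : v0 \in s' by rewrite mem_filter v0s andbT; apply/eqP.
have s'n0 : map idx s' != [::] by apply: contraTneq (map_f idx v0s') => ->.
(* The vector w of largest index with a nonzero coefficient is a combination of
   vectors of smaller index. *)
have [_ /mapP[w ws' ->] wmax] := seq_max_strict lt_total lt_trans s'n0.
have [cw ws] : c w != 0 /\ w \in s by move: ws'; rewrite mem_filter => /andP.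
have s'0 : \sum_(v <- s') c v *: v = 0.
  rewrite big_filter; move: s0; rewrite (bigID (fun v => c v != 0)) /= [X in _ + X]big1 ?addr0 //.
  by move=> v /negbNE/eqP ->; rewrite scale0r.
move: s'0; rewrite (bigD1_seq w) ?filter_uniq //=.
set S := \sum_(v <- s' | v != w) c v *: v => cwS.
have Sspan : lin_span (g @` [set j | lt j (idx w)]) S.
  exists [seq v <- s' | v != w], c; split; last by rewrite big_filter.
  move=> v; rewrite mem_filter => /andP[vw vs']; apply: mem_set.
  have vs : v \in s by move: vs'; rewrite mem_filter => /andP[].
  have [e|vltw] := wmax (idx v) (map_f idx vs'); last by exists (idx v); rewrite ?idxK.
  by move: vw; rewrite -(idxK v vs) e idxK ?eqxx.
case: (@g_new (idx w)); rewrite idxK //.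
have wS : w = (c w)^-1 *: (- S).
  have -> : - S = c w *: w by apply/eqP; rewrite eq_sym -subr_eq0 opprK cwS.
  by rewrite scalerA mulVf ?scale1r.
rewrite [X in lin_span _ X]wS.
apply: subspaceZ; first exact: lin_span_subspace.
by apply: subspaceN Sspan; exact: lin_span_subspace.
Qed.

End OutsideSpanOfPredecessors.

Lemma weight_le_enum (X : topologicalType) (A : Type) (x0 : X) : weight_le X A ->
  exists U : A -> set X, [/\ forall a, open (U a), forall a, U a !=set0 &
    forall O, open O -> O !=set0 -> exists a, U a `<=` O].
Proof.
move=> [B [[Bopen Bnbhs] BA]].
have Bsub x O : open O -> O x -> exists2 W, B W /\ W x & W `<=` O.
  by move=> Oopen Ox; apply: Bnbhs x O (open_nbhs_nbhs (conj Oopen Ox)).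
pose B' := [set W | B W /\ W !=set0].
have [W0 [BW0 W0x0] _] := Bsub x0 setT openT I.
have B'W0 : B' W0 by split => //; exists x0.
have /pfcard_geP[B'0|/surjfunPex[U B'U]] : B' #<= [set: A].
- by apply: card_le_trans BA; apply: subset_card_le => W [].
- by move: B'W0; rewrite B'0.
have UB' a : B' (U a) by rewrite B'U; exists a.
exists U; split => [a|a|O Oopen [x Ox]]; [exact/Bopen/(UB' a).1|exact: (UB' a).2|].
have [W [BW Wx] WO] := Bsub x O Oopen Ox.
have : B' W by split => //; exists x.
by rewrite B'U => -[a _ Ua]; exists a; rewrite Ua.
Qed.

Lemma dense_independent_subspaces (K : numFieldType) : theorem2p2_claim K.
Proof.
move=> X A Ainf XA [E [[_ [Eindep EX]] EA]].
have [a0 _] := infinite_setN0 Ainf.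
have [U [Uopen Un0 Ucover]] := weight_le_enum 0 XA.
have [pi pibij] : exists pi : A -> A * A, set_bij [set: A] [set: A * A] pi.
  by apply/(card_eq_bijP (a0, a0)); rewrite card_eq_sym -setXTT; exact: infinite_card_setXX.
have [lt [[ltwf lttot lttr] ltsmall]] := initial_well_order a0.
have Einf : infinite_set E by rewrite (eq_finite_set EA).
have [g gP] : exists g : A -> X,
    forall i, (U (pi i).2 `\` lin_span (g @` [set j | lt j i])) (g i).
  apply: (wf_choice 0 (P := fun i C => U (pi i).2 `\` lin_span C) ltwf) => i C Cle.
  apply: (open_not_in_small_span Eindep EX Einf _ (Uopen _) (Un0 _)) => EC.
  apply: (ltsmall i).
  apply: card_le_trans Cle; apply: card_le_trans EC.
  by move: EA; rewrite card_eq_sym card_eq_le => /andP[].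
have gnew i : ~ lin_span (g @` [set j | lt j i]) (g i) by have [] := gP i.
have ginj := outside_span_inj lttot gnew.
have gindep := outside_span_indep lttot lttr gnew.
exists (fun k => lin_span (g @` [set i | (pi i).1 = k])); split; last first.
  apply: (independent_family_lin_span gindep) => [k _ [i _ <-]|k j _ [i <- <-] [i' <- /ginj ->]] //.
move=> k; split; first exact: lin_span_subspace.
split.
  move=> O O0 Oopen; have [a Ua] := Ucover O Oopen O0; have [_ _ pisurj] := pibij.
  have [i _ pik] := pisurj (k, a) I.
  exists (g i); split; first by apply: Ua; have [] := gP i; rewrite pik.
  by apply: sub_lin_span; exists i; rewrite /= ?pik.
exists (g @` [set i | (pi i).1 = k]); split.
  split; [exact: sub_lin_span|split => //].
  by apply: lin_indep_sub gindep _ => _ [i _ <-]; exists i.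
exact: card_eq_trans (inj_card_eq (in2W ginj)) (card_fst_fiber a0 k pibij).
Qed.

Theorem theorem2p2 (R : realType) :
  theorem2p2_claim R /\ theorem2p2_claim (complex R).
Proof. by split; apply: dense_independent_subspaces. Qed.
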